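(* Let $X$ be a compact Hausdorff space and $A\subset X$ a nonempty finite subset. Then $\pi_n^M(X,A)=0$ for all $n>0$.
   Context: A continuous multivalued map $X\to Y$ is a subset $T\subset X\times Y$ such that the restriction of the projection $X\times Y\to X$ to $T$ is proper (universally closed), surjective and has finite fibers; $M(X,Y)$ is the set of these. $S_*^M(X)$ is the simplicial set with $S_n^M(X)=M(\Delta_n,X)$ ($\Delta_n$ the standard topological $n$-simplex), with face and degeneracy maps $\alpha\mapsto\alpha\circ\mathrm{gr}(f)=\{(s,x):(f(s),x)\in\alpha\}$ for $f$ the standard coface and codegeneracy maps; it is a Kan complex. Elements of $S_0^M(X)$ are identified with nonempty finite subsets of $X$. The multivalued homotopy groups are $\pi_n^M(X,A)=\pi_n(S_*^M(X),A)$, the simplicial homotopy groups at the vertex $A$. *)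

From HB Require Import structures.
From mathcomp Require Import all_boot all_order all_algebra.
From mathcomp Require Import all_classical all_reals all_analysis.
From mathcomp Require Import Rstruct Rstruct_topology.
Set Implicit Arguments. Unset Strict Implicit. Unset Printing Implicit Defensive.
Import Order.TTheory GRing.Theory Num.Theory.
Local Open Scope classical_set_scope.
Local Open Scope ring_scope.

Notation RR := Rdefinitions.R.

Definition pt (n : nat) := 'rV[RR]_(n.+1).

Definition simplex (n : nat) : set (pt n) :=
  [set s | (forall j, 0 <= s ord0 j) /\ \sum_j s ord0 j = 1].
Arguments simplex n : clear implicits.

Definition coface (n : nat) (i : 'I_(n.+2)) (s : pt n) : pt n.+1 :=
  \row_(j < n.+2) (if (j < i)%N then s ord0 (inord j)
                   else if (j == i :> nat) then 0 else s ord0 (inord j.-1)).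

Definition codegen (n : nat) (i : 'I_(n.+1)) (t : pt n.+1) : pt n :=
  \row_(j < n.+1) (if (j < i)%N then t ord0 (inord j)
                   else if (j == i :> nat) then t ord0 (inord j) + t ord0 (inord j.+1)
                   else t ord0 (inord j.+1)).

Section MV.
Variable X : topologicalType.

(* Candidate n-simplices: subsets of Δ_n × X (as subsets of R^(n+1) × X). *)
Definition mset (n : nat) := set (pt n * X).

Definition closed_map_on (S S' : topologicalType) (A : set S) (B : set S')
    (f : S -> S') : Prop :=
  forall K : set S, closed K -> exists K' : set S', closed K' /\
    f @` (A `&` K) = B `&` K'.

Definition proj_universally_closed (n : nat) (T : mset n) : Prop :=
  forall Z : topologicalType,
    closed_map_on (T `*` [set: Z]) (simplex n `*` [set: Z])
      (fun tz : (pt n * X) * Z => (tz.1.1, tz.2)).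

(* Continuous multivalued maps Δ_n -> X: the projection restricted to T is
   proper (universally closed), surjective onto Δ_n and has finite fibers. *)
Definition mvmap (n : nat) (T : mset n) : Prop :=
  [/\ T `<=` simplex n `*` [set: X],
      proj_universally_closed T,
      (forall s, simplex n s -> exists x, T (s, x)) &
      (forall s, simplex n s -> finite_set [set x | T (s, x)])].

Definition face (n : nat) (i : 'I_(n.+2)) (a : mset n.+1) : mset n :=
  [set sx | simplex n sx.1 /\ a (coface i sx.1, sx.2)].

Definition degen (n : nat) (i : 'I_(n.+1)) (a : mset n) : mset n.+1 :=
  [set sx | simplex n.+1 sx.1 /\ a (codegen i sx.1, sx.2)].

Definition vertex (A : set X) : mset 0 := [set sx | simplex 0 sx.1 /\ A sx.2].

Fixpoint base (A : set X) (n : nat) : mset n :=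
  match n with
  | 0 => vertex A
  | k.+1 => degen ord0 (@base A k)
  end.
Arguments base A n : clear implicits.

(* Elements of π_(m+1)(S^M_*(X), A): (m+1)-simplices all of whose faces are
   the base point. *)
Definition sphere (A : set X) (m : nat) (a : mset m.+1) : Prop :=
  mvmap a /\ forall i : 'I_(m.+2), face i a = base A m.

(* Simplicial homotopy (rel. boundary, for Kan complexes, as in May):
   a ~ b iff there is an (n+1)-simplex z with d_n z = a, d_(n+1) z = b and
   d_i z = base for i < n. *)
Definition shomotopic (A : set X) (m : nat) (a b : mset m.+1) : Prop :=
  exists z : mset m.+2, mvmap z /\
    face (inord m.+1) z = a /\ face (inord m.+2) z = b /\
    forall i : 'I_(m.+3), (i < m.+1)%N -> face i z = base A m.+1.

Definition pi_trivial (A : set X) (n : nat) : Prop :=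
  match n with
  | 0 => True
  | m.+1 => forall a : mset m.+1, sphere A a -> shomotopic A a (base A m.+1)
  end.

End MV.

(* Let a be an (m+1)-simplex of S^M(X) all of whose faces are the base point A.
   On Δ_(m+2) take a ∘ σ^(m+1) over the region t_(m+1) <= t_(m+2) and the
   constant map A over the region t_(m+2) <= t_(m+1), and glue by union:
   multivalued maps can be glued along closed pieces without any compatibility
   on the overlap, and universal closedness is preserved by pullback along
   continuous maps and by finite unions.  The two last faces of the result are
   a and the base point, and the other faces are the base point because a is
   constantly A on the boundary of Δ_(m+1). *)

From Pilot Require Import Defs.
From mathcomp Require Import all_boot all_order all_algebra.
From mathcomp Require Import all_classical all_analysis.
From mathcomp Require Import Rstruct Rstruct_topology.
Import Order.TTheory GRing.Theory Num.Theory.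
Local Open Scope classical_set_scope.
Local Open Scope ring_scope.
Set Implicit Arguments. Unset Strict Implicit.

Lemma coface_lift n (i : 'I_n.+2) (s : pt n) (j : 'I_n.+1) :
  coface i s ord0 (lift i j) = s ord0 j.
Proof.
rewrite mxE /= /bump; case: (ltnP j i) => ji; first by rewrite add0n ji inord_val.
rewrite add1n ltnNge leqW //= gtn_eqF ?ltnS //.
by rewrite inord_val.
Qed.

Lemma coface_self n (i : 'I_n.+2) (s : pt n) : coface i s ord0 i = 0.
Proof. by rewrite mxE ltnn eqxx. Qed.

Lemma simplex_ge0 n (s : pt n) j : simplex n s -> 0 <= s ord0 j.
Proof. by case. Qed.

Lemma simplex_coface n (i : 'I_n.+2) (s : pt n) :
  simplex n s -> simplex n.+1 (coface i s).
Proof.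
move=> [s_ge0 s_sum]; split.
  by move=> j; case: (unliftP i j) => [k ->|->]; rewrite ?coface_lift ?coface_self.
rewrite (bigD1_ord i) //= coface_self add0r.
by under eq_bigr do rewrite coface_lift.
Qed.

Definition uncoface n (i : 'I_n.+2) (u : pt n.+1) : pt n :=
  \row_j u ord0 (lift i j).

Lemma uncofaceK n (i : 'I_n.+2) (u : pt n.+1) :
  u ord0 i = 0 -> coface i (uncoface i u) = u.
Proof.
move=> ui0; apply/rowP => k.
by case: (unliftP i k) => [j ->|->]; rewrite ?coface_self ?ui0 // coface_lift mxE.
Qed.

Lemma simplex_uncoface n (i : 'I_n.+2) (u : pt n.+1) :
  simplex n.+1 u -> u ord0 i = 0 -> simplex n (uncoface i u).
Proof.
move=> [u_ge0 u_sum] ui0; split; first by move=> j; rewrite mxE.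
move: u_sum; rewrite (bigD1_ord i) //= ui0 add0r => <-.
by apply: eq_bigr => j _; rewrite mxE.
Qed.

Lemma codegenE n (i : 'I_n.+1) (t : pt n.+1) (j : 'I_n.+1) :
  codegen i t ord0 j = t ord0 (lift (lift ord0 i) j) +
    (if j == i then t ord0 (lift ord0 i) else 0).
Proof.
have inordE (k : nat) (o : 'I_n.+2) : k = o -> inord k = o by move=> ->; rewrite inord_val.
rewrite mxE /bump /= -[j == i]/(val j == val i); case: (ltngtP j i) => ji.
- rewrite addr0; congr (t ord0 _); apply: inordE.
  by rewrite /= /bump /= add1n leqNgt ltnS (ltnW ji).
- rewrite addr0; congr (t ord0 _); apply: inordE.
  by rewrite /= /bump /= add1n ji.
- have -> : j = i by apply: val_inj.
  congr (t ord0 _ + t ord0 _); apply: inordE => //.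
  by rewrite /= /bump /= add1n ltnn.
Qed.

Lemma codegen_lt n (i : 'I_n.+1) (t : pt n.+1) (j : 'I_n.+1) :
  (j < i)%N -> codegen i t ord0 j = t ord0 (inord j).
Proof. by rewrite mxE => ->. Qed.

Lemma simplex_codegen n (i : 'I_n.+1) (t : pt n.+1) :
  simplex n.+1 t -> simplex n (codegen i t).
Proof.
move=> [t_ge0 t_sum]; split.
  by move=> j; rewrite codegenE addr_ge0 //; case: ifP.
under eq_bigr do rewrite codegenE.
rewrite big_split /= -big_mkcond /= big_pred1_eq.
by rewrite -t_sum (bigD1_ord (lift ord0 i)) //= addrC.
Qed.

Lemma codegen_coface n (i : 'I_n.+1) (i' : 'I_n.+2) (s : pt n) :
  i' = i :> nat -> codegen i (coface i' s) = s.
Proof.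
move=> i'i; apply/rowP => j; rewrite !mxE.
have j_lt k : (k <= j.+1)%N -> (k < n.+2)%N.
  by move=> kj; rewrite (leq_ltn_trans kj) // ltnS.
rewrite !inordK ?j_lt // i'i; case: (ltngtP j i) => ji.
- by rewrite inord_val.
- by rewrite ltnNge (leqW (ltnW ji)) (gtn_eqF (leqW ji)) /= inord_val.
- by rewrite -ji ltnNge leqnSn (gtn_eqF (ltnSn _)) /= add0r inord_val.
Qed.

Lemma baseP (X : topologicalType) (A : set X) n (s : pt n) (x : X) :
  @base X A n (s, x) <-> simplex n s /\ A x.
Proof.
elim: n s => [|n IH] s //=; split; first by case=> sn /IH [].
by move=> [sn Ax]; split => //; apply/IH; split => //; exact: simplex_codegen.
Qed.

Lemma face_baseP (X : topologicalType) (A : set X) n (a : Defs.mset X n.+1)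
    (i : 'I_n.+2) (u : pt n.+1) (x : X) :
  face i a = @base X A n -> simplex n.+1 u -> u ord0 i = 0 -> (a (u, x) <-> A x).
Proof.
move=> ai su ui0.
have su' := simplex_uncoface su ui0.
have := baseP A (uncoface i u) x; rewrite -ai /face /= uncofaceK //.
by move=> e; split => [ax|Ax]; [case: (e.1 (conj su' ax))|case: (e.2 (conj su' Ax))].
Qed.

Lemma continuous_fst (S T : topologicalType) : continuous (@fst S T).
Proof. by move=> [s t]; exact: cvg_fst. Qed.

Lemma continuous_snd (S T : topologicalType) : continuous (@snd S T).
Proof. by move=> [s t]; exact: cvg_snd. Qed.

Lemma continuous_pair (Y S T : topologicalType) (f : Y -> S) (g : Y -> T) :
  continuous f -> continuous g -> continuous (fun y => (f y, g y)).
Proof. by move=> fc gc y; exact: cvg_pair (fc y) (gc y). Qed.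

Lemma continuous_entrywise (Y T : topologicalType) p q (f : Y -> 'M[T]_(p, q)) :
  (forall i j, continuous (fun y => f y i j)) -> continuous f.
Proof.
move=> fc y B /= [P nP sPB].
have : \forall z \near y, forall i j, P i j (f z i j).
  by apply: filter_forall => i; apply: filter_forall => j; exact: fc.
by apply: filterS => z Pz; exact: sPB.
Qed.

Lemma codegen_continuous n (i : 'I_n.+1) : continuous (@codegen n i).
Proof.
apply: continuous_entrywise => r j; rewrite (ord1 r).
have -> : (fun t => codegen i t ord0 j) = (fun t : pt n.+1 =>
    (t ord0 (lift (lift ord0 i) j) : RR^o) +
    (if j == i then t ord0 (lift ord0 i) else 0)).
  by apply: funext => t; rewrite codegenE.
move=> t; apply: (@continuousD _ RR^o _ (fun t : pt n.+1 => t ord0 _)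
  (fun t => if j == i then t ord0 (lift ord0 i) else 0)).
  exact: coord_continuous.
by case: eqP => _; [exact: coord_continuous|exact: cst_continuous].
Qed.

Lemma coface_continuous n (i : 'I_n.+2) : continuous (@coface n i).
Proof.
apply: continuous_entrywise => r j; rewrite (ord1 r).
have -> : (fun t => coface i t ord0 j) = (fun t : pt n =>
    if (j < i)%N then t ord0 (inord j)
    else if j == i :> nat then 0 else t ord0 (inord j.-1)).
  by apply: funext => t; rewrite mxE.
case: (j < i)%N; first exact: coord_continuous.
by case: (j == i :> nat); [exact: cst_continuous|exact: coord_continuous].
Qed.

Lemma closed_eq_continuous (Y : topologicalType) (V : normedModType RR)
    (f g : Y -> V) :
  continuous f -> continuous g -> closed [set y | f y = g y].
Proof.
move=> fc gc.
have -> : [set y | f y = g y] = (fun y => f y - g y) @^-1` [set 0].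
  by apply/seteqP; split => y /=; [move=> ->; rewrite subrr|move/subr0_eq].
apply: preimage_closed; first by move=> y _; exact: (continuousB (fc y) (gc y)).
exact/accessible_closed_set1/hausdorff_accessible/norm_hausdorff.
Qed.

Lemma closed_le_continuous (Y : topologicalType) (f g : Y -> RR) :
  continuous f -> continuous g -> closed [set y | f y <= g y].
Proof.
move=> fc gc.
have -> : [set y | f y <= g y] = (fun y => g y - f y) @^-1` [set x | 0 <= x].
  by apply/seteqP; split => y /=; rewrite subr_ge0.
apply: preimage_closed; last exact: closed_ge.
by move=> y _; exact: (@continuousB _ RR^o _ g f y (gc y) (fc y)).
Qed.

Lemma closed_coord_le n (i j : 'I_n.+1) : closed [set t : pt n | t ord0 i <= t ord0 j].
Proof. by apply: closed_le_continuous; exact: coord_continuous. Qed.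

Lemma proj_universally_closedU (X : topologicalType) n (T1 T2 : Defs.mset X n) :
  proj_universally_closed T1 -> proj_universally_closed T2 ->
  proj_universally_closed (T1 `|` T2).
Proof.
move=> T1uc T2uc Z K Kcl.
have [K1 [K1cl K1E]] := T1uc Z K Kcl; have [K2 [K2cl K2E]] := T2uc Z K Kcl.
exists (K1 `|` K2); split; first exact: closedU.
rewrite setIUr -K1E -K2E -image_setU -setIUl; congr (_ @` (_ `&` K)).
apply/seteqP; split => -[tx z].
  by case=> [[T1tx|T2tx] _]; [left|right].
by case=> -[Ttx _]; split=> //; [left|right].
Qed.

Lemma closed_graph_section (X Z : topologicalType) k n (f : pt k -> pt n)
    (K : set ((pt k * X) * Z)) :
  continuous f -> closed K ->
  closed [set p : (pt n * X) * (pt k * Z) | p.1.1 = f p.2.1 /\ K ((p.2.1, p.1.2), p.2.2)].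
Proof.
move=> fc Kcl; apply: closedI.
  apply: closed_eq_continuous => p.
    by apply: continuous_comp; exact: continuous_fst.
  apply: continuous_comp; last exact: fc.
  by apply: continuous_comp; [exact: continuous_snd|exact: continuous_fst].
apply: (preimage_closed (f := fun p : (pt n * X) * (pt k * Z) =>
                                   ((p.2.1, p.1.2), p.2.2))) => // p _.
apply: continuous_pair; first apply: continuous_pair.
- by move=> q; apply: continuous_comp; [exact: continuous_snd|exact: continuous_fst].
- by move=> q; apply: continuous_comp; [exact: continuous_fst|exact: continuous_snd].
- by move=> q; apply: continuous_comp; exact: continuous_snd.
Qed.

Lemma proj_universally_closed_pullback (X : topologicalType) k n
    (T : Defs.mset X n) (f : pt k -> pt n) (S : set (pt k)) :
  proj_universally_closed T -> continuous f -> closed S ->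
  (forall t, simplex k t -> S t -> simplex n (f t)) ->
  proj_universally_closed
    [set tx : pt k * X | (simplex k tx.1 /\ S tx.1) /\ T (f tx.1, tx.2)].
Proof.
move=> Tuc fc Scl fS Z K Kcl.
(* Apply the universal closedness of T, with parameter space pt k * Z, to the
   graph of f cut down by K. *)
have [L' [L'cl L'E]] := Tuc _ _ (closed_graph_section fc Kcl).
exists [set q | S q.1 /\ L' (f q.1, q)]; split.
  apply: closedI; first by apply: (preimage_closed (f := fst)) => // q _;
    exact: continuous_fst.
  apply: (preimage_closed (f := fun q : pt k * Z => (f q.1, q))) => // q _.
  apply: continuous_pair => [r|r //].
  by apply: continuous_comp; [exact: continuous_fst|exact: fc].
have L'P t w : simplex k t -> S t ->
    L' (f t, (t, w)) <-> exists x, T (f t, x) /\ K ((t, x), w).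
  move=> st St; split => [L'tw|[x [Tx Kx]]].
    have : ((simplex n `*` setT) `&` L') (f t, (t, w)).
      by split => //; split => //; exact: fS.
    rewrite -L'E => -[[[u x] [t' w']] [[Tux _] [/= eu Kx]] [_ <- <-]].
    by subst u; exists x.
  have : ((simplex n `*` setT) `&` L') (f t, (t, w)).
    by rewrite -L'E; exists ((f t, x), (t, w)).
  by case.
apply/seteqP; split.
  move=> _ [[[t x] w] [[[[st St] Tx] _] Kx] <-] /=.
  by split; [|split => //; apply/L'P => //; exists x].
move=> [t w] [[st _] [St L'tw]].
have [x [Tx Kx]] := (L'P t w st St).1 L'tw.
by exists ((t, x), w).
Qed.

Section NullHomotopy.
Variables (X : topologicalType) (A : set X) (m : nat) (a : Defs.mset X m.+1).

Definition merge_last : pt m.+2 -> pt m.+1 := codegen ord_max.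

Definition collapse_last (t : pt m.+2) : pt m.+1 :=
  coface ord_max (codegen ord_max (merge_last t)).

Local Notation p1 := (inord m.+1 : 'I_m.+3).
Local Notation p2 := (inord m.+2 : 'I_m.+3).

(* The constant part is written as a pullback of a as well: collapse_last lands in
   the last face of Δ_(m+1), on which a is the base point. *)
Definition contraction : Defs.mset X m.+2 :=
  [set tx | (simplex m.+2 tx.1 /\ tx.1 ord0 p1 <= tx.1 ord0 p2) /\
            a (merge_last tx.1, tx.2)] `|`
  [set tx | (simplex m.+2 tx.1 /\ tx.1 ord0 p2 <= tx.1 ord0 p1) /\
            a (collapse_last tx.1, tx.2)].

Lemma simplex_merge_last t : simplex m.+2 t -> simplex m.+1 (merge_last t).
Proof. exact: simplex_codegen. Qed.

Lemma simplex_collapse_last t : simplex m.+2 t -> simplex m.+1 (collapse_last t).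
Proof. by move=> st; apply/simplex_coface/simplex_codegen/simplex_merge_last. Qed.

Lemma merge_last_continuous : continuous merge_last.
Proof. exact: codegen_continuous. Qed.

Lemma collapse_last_continuous : continuous collapse_last.
Proof.
move=> t; apply: continuous_comp; last exact: coface_continuous.
by apply: continuous_comp; [exact: merge_last_continuous|exact: codegen_continuous].
Qed.

Hypothesis a_mvmap : mvmap a.
Hypothesis a_faces : forall i, face i a = @base X A m.

Lemma collapse_lastP t x : simplex m.+2 t -> (a (collapse_last t, x) <-> A x).
Proof.
move=> st.
exact: (face_baseP x (a_faces ord_max) (simplex_collapse_last st) (coface_self _ _)).
Qed.

Lemma contractionP t x : contraction (t, x) <-> simplex m.+2 t /\
  ((t ord0 p1 <= t ord0 p2 /\ a (merge_last t, x)) \/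
   (t ord0 p2 <= t ord0 p1 /\ A x)).
Proof.
split.
  case=> -[[st le] ax]; split=> //; first by left.
  by right; split=> //; apply/(collapse_lastP x st).
move=> [st [[le ax]|[le Ax]]]; [by left|right].
by split=> //; apply/(collapse_lastP x st).
Qed.

Hypothesis A_finite : finite_set A.
Hypothesis A_nonempty : exists x, A x.

Lemma contraction_mvmap : mvmap contraction.
Proof.
have [a_sub a_uc a_surj a_fin] := a_mvmap.
split.
- by move=> [t x] /contractionP [].
- apply: proj_universally_closedU.
    exact: (proj_universally_closed_pullback (S := [set t | t ord0 p1 <= t ord0 p2])
      a_uc merge_last_continuous (@closed_coord_le _ _ _)
      (fun t st _ => simplex_merge_last st)).
  exact: (proj_universally_closed_pullback (S := [set t | t ord0 p2 <= t ord0 p1])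
    a_uc collapse_last_continuous (@closed_coord_le _ _ _)
    (fun t st _ => simplex_collapse_last st)).
- move=> t st; have [le|le] := leP (t ord0 p1) (t ord0 p2).
    have [x ax] := a_surj _ (simplex_merge_last st).
    by exists x; apply/contractionP; split=> //; left.
  have [x Ax] := A_nonempty.
  by exists x; apply/contractionP; split=> //; right; split=> //; exact: ltW.
- move=> t st; apply: (@sub_finite_set _ _ ([set x | a (merge_last t, x)] `|` A)).
    by move=> x /contractionP [_ [[_ ax]|[_ Ax]]]; [left|right].
  by rewrite finite_setU; split=> //; exact: a_fin (simplex_merge_last st).
Qed.

Lemma face_contractionP (i : 'I_m.+3) s x :
  face i contraction (s, x) <-> simplex m.+1 s /\
  ((coface i s ord0 p1 <= coface i s ord0 p2 /\ a (merge_last (coface i s), x)) \/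
   (coface i s ord0 p2 <= coface i s ord0 p1 /\ A x)).
Proof.
rewrite /face /=; split=> [[ss /contractionP [_ h]]|[ss h]] //.
by split=> //; apply/contractionP; split=> //; exact: simplex_coface.
Qed.

Lemma coface_p1_p2 (s : pt m.+1) : coface p1 s ord0 p2 = s ord0 ord_max.
Proof.
rewrite -(coface_lift p1 s ord_max); congr (coface _ _ _ _).
by apply: val_inj; rewrite /= /bump !inordK // leqnn.
Qed.

Lemma coface_p2_p1 (s : pt m.+1) : coface p2 s ord0 p1 = s ord0 ord_max.
Proof.
rewrite -(coface_lift p2 s ord_max); congr (coface _ _ _ _).
by apply: val_inj; rewrite /= /bump !inordK // ltnn.
Qed.

Lemma merge_last_max t : merge_last t ord0 ord_max = t ord0 p1 + t ord0 p2.
Proof. by rewrite mxE /= ltnn eqxx. Qed.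

Lemma merge_last_coface_lt (i : 'I_m.+3) s :
  (i < m.+1)%N -> merge_last (coface i s) ord0 (inord i) = 0.
Proof.
move=> ilt; have iv : (inord i : 'I_m.+2) = i :> nat by rewrite inordK // ltnW.
by rewrite /merge_last codegen_lt ?iv // inord_val coface_self.
Qed.

Lemma face_contraction_p1 : face p1 contraction = a.
Proof.
have [a_sub _ _ _] := a_mvmap.
have mergeK s : merge_last (coface p1 s) = s by apply: codegen_coface; rewrite /= inordK.
apply/seteqP; split=> -[s x].
  move=> /face_contractionP [ss [[_ ax]|[le Ax]]]; first by rewrite mergeK in ax.
  move: le; rewrite coface_self coface_p1_p2 => le.
  have s0 : s ord0 ord_max = 0 by apply/le_anti; rewrite le simplex_ge0.
  exact/(face_baseP x (a_faces ord_max) ss s0).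
move=> ax; have [ss _] := a_sub _ ax.
apply/face_contractionP; split=> //; left; rewrite mergeK; split=> //.
by rewrite coface_self coface_p1_p2 simplex_ge0.
Qed.

Lemma face_contraction_p2 : face p2 contraction = @base X A m.+1.
Proof.
apply/seteqP; split=> -[s x].
  move=> /face_contractionP [ss [[le ax]|[_ Ax]]]; apply/baseP; split=> //.
  move: le; rewrite coface_self coface_p2_p1 => le.
  have s0 : s ord0 ord_max = 0 by apply/le_anti; rewrite le simplex_ge0.
  apply/(face_baseP x (a_faces ord_max) (simplex_merge_last (simplex_coface p2 ss))) => //.
  by rewrite merge_last_max coface_p2_p1 coface_self s0 addr0.
move=> /baseP [ss Ax]; apply/face_contractionP; split=> //; right; split=> //.
by rewrite coface_self coface_p2_p1 simplex_ge0.
Qed.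

Lemma face_contraction_lt (i : 'I_m.+3) :
  (i < m.+1)%N -> face i contraction = @base X A m.+1.
Proof.
move=> ilt.
have aP s x : simplex m.+1 s -> (a (merge_last (coface i s), x) <-> A x).
  move=> ss; have sm := simplex_merge_last (simplex_coface i ss).
  exact: (face_baseP x (a_faces (inord i)) sm (merge_last_coface_lt s ilt)).
apply/seteqP; split=> -[s x].
  move=> /face_contractionP [ss h]; apply/baseP; split=> //.
  by case: h => -[_ //]; rewrite aP.
move=> /baseP [ss Ax]; apply/face_contractionP; split=> //.
have [le|lt] := leP (coface i s ord0 p1) (coface i s ord0 p2).
  by left; rewrite aP.
by right; split=> //; exact: ltW.
Qed.

End NullHomotopy.

Theorem mainTheorem11 (X : topologicalType)
  (hcomp : compact [set: X]) (hhaus : hausdorff_space X)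
  (A : set X) (hfin : finite_set A) (hne : exists a, A a) :
  forall n : nat, (0 < n)%N -> pi_trivial A n.
Proof.
move=> [//|m] _ a [a_mvmap a_faces].
exists (contraction a); split; first exact: contraction_mvmap a_mvmap a_faces hfin hne.
split; first exact: face_contraction_p1 a_mvmap a_faces.
split; first exact: face_contraction_p2 a_faces.
by move=> i; apply: (face_contraction_lt a_faces).
Qed.
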